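(* Let $r\geqslant 3$ be an odd integer and let $\Gamma\cong\mathbb{Z}_{2r}\oplus\mathbb{Z}_8$. Then there exists an $\mathrm{MRS}_\Gamma(r,8;2)$ in which every row sum and every column sum equals $0_\Gamma$.
   Context: For an abelian group $\Gamma$ of order $abc$, an $\mathrm{MRS}_\Gamma(a,b;c)$ is a collection of $c$ arrays of size $a\times b$ whose entries are the elements of $\Gamma$, each appearing exactly once and in a unique array, such that there are $\omega,\delta\in\Gamma$ with every row sum (in every array) equal to $\omega$ and every column sum (in every array) equal to $\delta$. *)

From HB Require Import structures.
From mathcomp Require Import all_boot all_order all_algebra.
Set Implicit Arguments. Unset Strict Implicit. Unset Printing Implicit Defensive.
Import GRing.Theory.
Local Open Scope ring_scope.

(* An MRS_G(a,b;c): c arrays A k (k < c) of size a x b with entries in the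
   finite abelian group G, such that every element of G appears exactly once
   among all entries of all arrays (the entry map is a bijection from
   positions to G), with every row sum equal to omega and every column sum
   equal to delta. *)
Definition is_MRS (G : zmodType) (a b c : nat)
    (A : 'I_c -> 'M[G]_(a, b)) (omega delta : G) : Prop :=
  bijective (fun p : 'I_c * ('I_a * 'I_b) => A p.1 p.2.1 p.2.2) /\
  (forall (k : 'I_c) (i : 'I_a), \sum_(j < b) A k i j = omega) /\
  (forall (k : 'I_c) (j : 'I_b), \sum_(i < a) A k i j = delta).

Definition MRS (G : zmodType) (a b c : nat) (A : 'I_c -> 'M[G]_(a, b)) : Prop :=
  exists omega delta : G, is_MRS A omega delta.

(* View Z_(2r), r = 2m + 1 odd, as Z_r x Z_2 through x = 2a + r t.  The entry
   in row i and column j of array k is (2 (+-i) + r t, y), with the sign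
   depending only on (k, j) and the labels (t, y) in Z_2 x Z_8 read from a
   seed table at (k, j) and the class of i among {0}, {1}, {r - 1}, [2, m] and
   [m + 1, r - 2].  Negating i swaps the classes 1, 2 and 3, 4, so two entries
   with the same first coordinate share the signed row index +-i and the entry
   map is injective as soon as a finite table of labels is.  Every row holds
   four entries of each sign, so a row sum reduces to its labels; a column sum
   reduces to sum_i 2i = r (r - 1) = 0 in Z_(2r) plus a combination of labels
   in which the classes 3 and 4, of equal size, always come together. *)

From HB Require Import structures.
From mathcomp Require Import all_boot all_order all_algebra.
From mathcomp Require Import zify.

Set Implicit Arguments.
Unset Strict Implicit.
Unset Printing Implicit Defensive.

Import GRing.Theory.
Local Open Scope ring_scope.

Lemma sum_pair (I : finType) (U V : nmodType) (F : I -> U) (G : I -> V) :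
  \sum_i (F i, G i) = (\sum_i F i, \sum_i G i).
Proof. by elim/big_rec3: _ => //= i x y z _ ->. Qed.

Lemma sum_comp_fibres (I : finType) (V : nmodType) (m : nat) (f : I -> nat)
    (F : nat -> V) :
  (forall i, (f i < m)%N) ->
  \sum_i F (f i) = \sum_(c < m) F c *+ #|[pred i | f i == c]|.
Proof.
move=> f_lt; rewrite (partition_big (fun i => Ordinal (f_lt i)) xpredT) //=.
apply: eq_bigr => c _; rewrite -sumr_const.
by apply: eq_big => [i | i /eqP <-] //=; rewrite -val_eqE.
Qed.

Lemma sum_if_opp (I : finType) (V : zmodType) (s : pred I) (x : V) :
  \sum_i (if s i then x else - x) = x *~ \sum_i (if s i then 1 else -1).
Proof.
by rewrite mulrz_sumr; apply: eq_bigr => i _; case: (s i); rewrite ?mulrN1z.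
Qed.

Lemma all_iota_lt n (P : pred nat) :
  all P (iota 0 n) -> forall i, (i < n)%N -> P i.
Proof. by move/allP=> P_all i lt_in; apply: P_all; rewrite mem_iota. Qed.

Lemma natr_mul_double_eq0 r q : (2 * r * q)%:R = 0 :> 'Z_(2 * r).
Proof.
case: r => [|r]; first by rewrite !mul0n.
by rewrite natrM pchar_Zp ?mul0r // mulnS.
Qed.

Lemma natr_mul_even_eq0 r q : ~~ odd q -> (r * q)%:R = 0 :> 'Z_(2 * r).
Proof.
move=> q_even; have -> : (r * q = 2 * r * q./2)%N.
  by rewrite -[in LHS](even_halfK q_even) -mul2n mulnCA mulnA.
exact: natr_mul_double_eq0.
Qed.

Section OddModulus.

Variable r : nat.
Hypothesis r_odd : odd r.

Lemma sum_natr_double_eq0 : \sum_(i < r) (2 * i)%:R = 0 :> 'Z_(2 * r).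
Proof.
rewrite -natr_sum -big_distrr -(big_mkord xpredT (fun i => i)) /=.
by rewrite bin2_sum bin2odd // mulnA natr_mul_double_eq0.
Qed.

(* For odd r, a |-> 2a and t |-> r t embed Z_r and Z_2 as complementary
   subgroups of Z_(2r). *)
Lemma natr_double_add_inj (a b : nat) (t u : bool) :
  (a < r)%N -> (b < r)%N ->
  (2 * a + r * t)%:R = (2 * b + r * u)%:R :> 'Z_(2 * r) -> a = b /\ t = u.
Proof.
have double_r_gt1 : (1 < 2 * r)%N by case: r r_odd => // r' _; rewrite mulnS.
move=> lt_ar lt_br /(congr1 (@nat_of_ord _)); rewrite !val_Zp_nat // => eq_mod.
have r_mod2 : (r %% 2 = 1)%N by rewrite modn2 r_odd.
have eq_tu : t = u.
  have := congr1 (modn^~ 2) eq_mod; rewrite !modn_dvdm ?dvdn_mulr //.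
  by case: (t) (u) => [] [] /=; lia.
split=> //; move: eq_mod; rewrite eq_tu => /eqP; rewrite eqn_modDr.
by rewrite !modn_small ?ltn_pmul2l //; lia.
Qed.

End OddModulus.

Definition mirror_class (c : nat) : nat :=
  (match c with 1 => 2 | 2 => 1 | 3 => 4 | 4 => 3 | _ => c end)%N.

Lemma mirror_classK : involutive mirror_class.
Proof. by move=> c; case: c => [|[|[|[|[|c]]]]]. Qed.

Definition signed_class (b : bool) (c : nat) : nat :=
  if b then c else mirror_class c.

Lemma signed_classK b : involutive (signed_class b).
Proof. by case: b => //; exact: mirror_classK. Qed.

Section RowClasses.

Variable n : nat.
Local Notation r := n.+1.
Hypothesis r_odd : odd r.
Hypothesis r_gt2 : (2 < r)%N.

Definition signed (b : bool) (i : 'I_r) : 'I_r := if b then i else - i.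

Lemma signedK b : involutive (signed b).
Proof. by case: b => //; exact: opprK. Qed.

Lemma natr_double_signed b (i : 'I_r) :
  (2 * signed b i)%:R = if b then (2 * i)%:R else - (2 * i)%:R :> 'Z_(2 * r).
Proof.
case: b => //.
apply: (addIr (2 * i)%:R); rewrite addNr -natrD -mulnDr.
have /dvdnP[q ->] : (2 * r %| 2 * (- i + i))%N.
  by rewrite dvdn_pmul2l // /dvdn /= modnDml subnK ?modnn // ltnW.
by rewrite [(q * _)%N]mulnC natr_mul_double_eq0.
Qed.

Definition row_class (i : 'I_r) : nat :=
  (if i == 0 :> nat then 0 else if i == 1 :> nat then 1
   else if i == n :> nat then 2 else if 2 * i < r then 3 else 4)%N.

Lemma row_class_lt i : (row_class i < 5)%N.
Proof. by rewrite /row_class; repeat case: ifP. Qed.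

Lemma row_class_opp i : row_class (- i) = mirror_class (row_class i).
Proof.
have [-> | i_neq0] := eqVneq i 0; first by rewrite oppr0.
have i_gt0 : (0 < i)%N by rewrite lt0n.
have lt_ir := ltn_ord i.
have val_opp : (- i : 'I_r) = (r - i)%N :> nat by rewrite /= modn_small; lia.
have : (2 * i != r)%N by apply: contraTneq r_odd => <-; rewrite oddM.
by rewrite /row_class val_opp; repeat case: ifP; rewrite /mirror_class /=; lia.
Qed.

Lemma row_class_signed b i : row_class (signed b i) = signed_class b (row_class i).
Proof. by case: b => //; exact: row_class_opp. Qed.

Lemma card_row_class_mirror c :
  #|[pred i | row_class i == mirror_class c]| = #|[pred i | row_class i == c]|.
Proof.
rewrite -!sum1_card (reindex_inj oppr_inj) /=; apply: eq_bigl => i.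
by rewrite !inE row_class_opp (inj_eq (can_inj mirror_classK)).
Qed.

Lemma card_row_class0 : #|[pred i | row_class i == 0%N]| = 1%N.
Proof.
apply: (@eq_card1 _ 0) => i; rewrite !inE /row_class -val_eqE /=.
by repeat case: ifP.
Qed.

Lemma card_row_class1 : #|[pred i | row_class i == 1%N]| = 1%N.
Proof.
apply: (@eq_card1 _ (Ordinal (ltnW r_gt2))) => i.
rewrite !inE /row_class -val_eqE /=.
case: (nat_of_ord i =P 0%N) => [-> // | _]; case: (nat_of_ord i =P 1%N) => [// | _].
by repeat case: ifP.
Qed.

Lemma sum_row_class_eq0 (V : zmodType) (F : nat -> V) :
  F 0%N + F 1%N + F 2%N = 0 -> F 3%N + F 4%N = 0 ->
  \sum_i F (row_class i) = 0.
Proof.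
move=> F012 F34; rewrite (sum_comp_fibres F row_class_lt).
rewrite -(big_mkord xpredT (fun c => F c *+ #|[pred i | row_class i == c]|)).
rewrite /index_iota /= !big_cons big_nil card_row_class0 card_row_class1.
rewrite (card_row_class_mirror 1) card_row_class1 (card_row_class_mirror 3).
by rewrite addr0 !mulr1n !addrA -addrA -mulrnDl F34 mul0rn addr0 F012.
Qed.

End RowClasses.

Definition seed_bits : seq (seq (seq nat)) :=
  [:: [:: [:: 1; 1; 0; 0; 1; 0; 1; 0]; [:: 0; 1; 0; 0; 1; 1; 0; 1]];
      [:: [:: 0; 0; 0; 1; 0; 1; 1; 1]; [:: 0; 0; 0; 0; 1; 1; 1; 1]];
      [:: [:: 1; 1; 0; 1; 1; 1; 0; 1]; [:: 0; 1; 0; 0; 0; 0; 1; 0]];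
      [:: [:: 0; 0; 0; 1; 0; 1; 1; 1]; [:: 0; 0; 0; 0; 1; 1; 1; 1]];
      [:: [:: 0; 0; 0; 1; 0; 1; 1; 1]; [:: 0; 0; 0; 0; 1; 1; 1; 1]]]%N.

Definition seed_ys : seq (seq (seq nat)) :=
  [:: [:: [:: 6; 1; 3; 2; 7; 5; 0; 0]; [:: 6; 5; 7; 1; 4; 2; 4; 3]];
      [:: [:: 0; 1; 7; 2; 4; 0; 3; 7]; [:: 2; 3; 5; 6; 1; 4; 5; 6]];
      [:: [:: 2; 6; 6; 4; 5; 3; 5; 1]; [:: 0; 0; 4; 1; 3; 2; 7; 7]];
      [:: [:: 0; 1; 7; 2; 4; 0; 3; 7]; [:: 2; 3; 5; 6; 1; 4; 5; 6]];
      [:: [:: 0; 7; 1; 6; 4; 0; 5; 1]; [:: 6; 5; 3; 2; 7; 4; 3; 2]]]%N.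

Definition seed_signs : seq (seq bool) :=
  [:: [:: true; true; true; true; false; false; false; false];
      [:: true; false; false; true; false; true; false; true]].

Definition seed_bit (c k j : nat) : bool :=
  nth 0 (nth [::] (nth [::] seed_bits c) k) j == 1%N.

Definition seed_y (c k j : nat) : 'Z_8 :=
  (nth 0 (nth [::] (nth [::] seed_ys c) k) j)%:R.

Definition seed_sign (k j : nat) : bool := nth false (nth [::] seed_signs k) j.

(* The labels at (k, j) of a row whose signed index (+-i at (k, j)) has class c. *)
Definition seed_code (c k j : nat) : bool * 'Z_8 :=
  let c' := signed_class (seed_sign k j) c in (seed_bit c' k j, seed_y c' k j).

Lemma seed_code_inj (c : nat) (k1 k2 : 'I_2) (j1 j2 : 'I_8) : (c < 5)%N ->
  seed_code c k1 j1 = seed_code c k2 j2 -> (k1, j1) = (k2, j2).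
Proof.
move=> lt_c5 eq_code.
have checked : all (fun c => all (fun k1 => all (fun j1 =>
    all (fun k2 => all (fun j2 =>
      (seed_code c k1 j1 == seed_code c k2 j2) ==> (k1 == k2) && (j1 == j2))
    (iota 0 8)) (iota 0 2)) (iota 0 8)) (iota 0 2)) (iota 0 5).
  by vm_compute.
have := all_iota_lt (all_iota_lt (all_iota_lt (all_iota_lt
  (all_iota_lt checked lt_c5) (ltn_ord k1)) (ltn_ord j1)) (ltn_ord k2))
  (ltn_ord j2).
by rewrite eq_code eqxx => /andP[/eqP/ord_inj-> /eqP/ord_inj->].
Qed.

Lemma seed_bits_row_even c (k : 'I_2) : (c < 5)%N ->
  ~~ odd (\sum_(j < 8) seed_bit c k j)%N.
Proof.
move=> lt_c5; rewrite -(big_mkord xpredT (fun j => nat_of_bool (seed_bit c k j))).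
have checked : all (fun c => all (fun k =>
    ~~ odd (\sum_(0 <= j < 8) seed_bit c k j)%N) (iota 0 2)) (iota 0 5).
  by rewrite unlock; vm_compute.
by have := all_iota_lt (all_iota_lt checked lt_c5) (ltn_ord k).
Qed.

Lemma seed_y_row_sum c (k : 'I_2) : (c < 5)%N -> \sum_(j < 8) seed_y c k j = 0.
Proof.
move=> lt_c5; apply/eqP; rewrite -(big_mkord xpredT (seed_y c k)).
have checked : all (fun c => all (fun k =>
    \sum_(0 <= j < 8) seed_y c k j == 0) (iota 0 2)) (iota 0 5).
  by rewrite unlock; vm_compute.
by have := all_iota_lt (all_iota_lt checked lt_c5) (ltn_ord k).
Qed.

Lemma seed_signs_balanced (k : 'I_2) :
  \sum_(j < 8) (if seed_sign k j then 1 else -1) = 0 :> int.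
Proof.
apply/eqP; rewrite -(big_mkord xpredT (fun j => if seed_sign k j then 1 else -1)).
have checked : all (fun k =>
    \sum_(0 <= j < 8) (if seed_sign k j then 1 else -1) == 0 :> int) (iota 0 2).
  by rewrite unlock; vm_compute.
by have := all_iota_lt checked (ltn_ord k).
Qed.

Lemma seed_bits_col_even (k : 'I_2) (j : 'I_8) :
  ~~ odd (seed_bit 0 k j + seed_bit 1 k j + seed_bit 2 k j) /\
  ~~ odd (seed_bit 3 k j + seed_bit 4 k j).
Proof.
have checked : all (fun k => all (fun j =>
    ~~ odd (seed_bit 0 k j + seed_bit 1 k j + seed_bit 2 k j) &&
    ~~ odd (seed_bit 3 k j + seed_bit 4 k j)) (iota 0 8)) (iota 0 2).
  by vm_compute.
by have /andP := all_iota_lt (all_iota_lt checked (ltn_ord k)) (ltn_ord j).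
Qed.

Lemma seed_y_col_sum (k : 'I_2) (j : 'I_8) :
  seed_y 0 k j + seed_y 1 k j + seed_y 2 k j = 0 /\ seed_y 3 k j + seed_y 4 k j = 0.
Proof.
have checked : all (fun k => all (fun j =>
    (seed_y 0 k j + seed_y 1 k j + seed_y 2 k j == 0) &&
    (seed_y 3 k j + seed_y 4 k j == 0)) (iota 0 8)) (iota 0 2).
  by vm_compute.
have := all_iota_lt (all_iota_lt checked (ltn_ord k)) (ltn_ord j).
by case/andP=> /eqP-> /eqP->.
Qed.

Section Construction.

Variable n : nat.
Local Notation r := n.+1.
Hypothesis r_odd : odd r.
Hypothesis r_gt2 : (2 < r)%N.

Definition mrs_entry (k : 'I_2) (i : 'I_r) (j : 'I_8) : 'Z_(2 * r) * 'Z_8 :=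
  let c := row_class i in
  ((2 * signed (seed_sign k j) i + r * seed_bit c k j)%:R, seed_y c k j).

Definition mrs_array (k : 'I_2) : 'M_(r, 8) := \matrix_(i, j) mrs_entry k i j.

Lemma seed_code_signed_row (k : 'I_2) (i : 'I_r) (j : 'I_8) :
  seed_code (row_class (signed (seed_sign k j) i)) k j =
  (seed_bit (row_class i) k j, seed_y (row_class i) k j).
Proof. by rewrite /seed_code row_class_signed // signed_classK. Qed.

Lemma mrs_entry_inj k1 i1 j1 k2 i2 j2 :
  mrs_entry k1 i1 j1 = mrs_entry k2 i2 j2 -> (k1, (i1, j1)) = (k2, (i2, j2)).
Proof.
case=> /natr_double_add_inj[] // /ord_inj eq_signed eq_bit eq_y.
have [eq_k eq_j] : (k1, j1) = (k2, j2).
  apply: (seed_code_inj (row_class_lt (signed (seed_sign k1 j1) i1))).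
  by rewrite seed_code_signed_row eq_signed seed_code_signed_row eq_bit eq_y.
by subst k2 j2; rewrite (can_inj (signedK _) eq_signed).
Qed.

Lemma mrs_array_bij :
  bijective (fun p : 'I_2 * ('I_r * 'I_8) => mrs_array p.1 p.2.1 p.2.2).
Proof.
apply: inj_card_bij => [[k1 [i1 j1]] [k2 [i2 j2]] | ].
  by rewrite /= !mxE => /mrs_entry_inj.
by rewrite !card_prod !card_ord !Zp_cast //; lia.
Qed.

Lemma mrs_row_sum k i : \sum_j mrs_entry k i j = 0.
Proof.
rewrite /mrs_entry sum_pair seed_y_row_sum ?row_class_lt //.
rewrite (eq_bigr _ (fun j _ => natrD _ _ _)) big_split /=.
rewrite (eq_bigr _ (fun j _ => natr_double_signed _ _)).
rewrite sum_if_opp seed_signs_balanced mulr0z add0r.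
rewrite -natr_sum -big_distrr natr_mul_even_eq0 //.
exact/seed_bits_row_even/row_class_lt.
Qed.

Lemma mrs_col_sum k j : \sum_i mrs_entry k i j = 0.
Proof.
have [bits012 bits34] := seed_bits_col_even k j.
have [ys012 ys34] := seed_y_col_sum k j.
rewrite /mrs_entry sum_pair.
rewrite (sum_row_class_eq0 r_odd r_gt2 (F := fun c => seed_y c k j)) //.
rewrite (eq_bigr _ (fun i _ => natrD _ _ _)) big_split /=.
rewrite (eq_bigr _ (fun i _ => natr_double_signed _ _)).
rewrite (sum_row_class_eq0 r_odd r_gt2 (F := fun c => (r * seed_bit c k j)%:R)) //=.
- by case: seed_sign; rewrite ?sumrN sum_natr_double_eq0 // ?oppr0 add0r.
- by rewrite -!natrD -!mulnDr natr_mul_even_eq0.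
- by rewrite -natrD -mulnDr natr_mul_even_eq0.
Qed.

Lemma mrs_is_MRS : is_MRS mrs_array 0 0.
Proof.
split; first exact: mrs_array_bij.
split=> k x; under eq_bigr do rewrite mxE.
- exact: mrs_row_sum.
- exact: mrs_col_sum.
Qed.

End Construction.

Theorem lemma4p8 (r : nat) (hr3 : (3 <= r)%N) (hodd : odd r) :
  exists A : 'I_2 -> 'M[('Z_(2 * r) * 'Z_8)%type]_(r, 8),
    MRS A /\ is_MRS A 0 0.
Proof.
case: r hr3 hodd => // n r_gt2 r_odd.
have mrs := mrs_is_MRS r_odd r_gt2.
by exists (mrs_array n); split; first exists 0, 0.
Qed.
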